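(* Let $k\le n$ be positive integers, $x^*\in\mathbb{R}^n$ with support $S^*$, $|S^*|\le k$, $\mathcal{X}^0\in\mathbb{R}^n$ and $\eta>0$. Consider the oracle sequence $(S^t,u^t,\mathcal{X}^t)_{t\ge0}$ and the counts $c^t_i$ defined below. For all $i\in S^*$ and all integers $t\ge1$, $$c^t_i\le\frac{2\|\mathcal{X}^0\|_\infty}{\eta|x^*_i|}+1.$$
   Context: $S^*=\{i:x^*_i\neq0\}$. For $v\in\mathbb{R}^n$, $\mathrm{largest}_k(v)$ is the set of indices of the $k$ entries of $v$ with largest absolute value (ties broken by selecting the highest indices). The oracle sequence is defined for all $t\ge0$ by $S^t=\mathrm{largest}_k(\mathcal{X}^t)$, $u^t_i=-\eta x^*_i$ if $i\in S^*\setminus S^t$ and $u^t_i=0$ otherwise, and $\mathcal{X}^{t+1}=\mathcal{X}^t-u^t$. For $i\in\{1,\dots,n\}$, $c^0_i=0$ and, for $t\ge1$, $c^t_i=|\{t'\in\{0,\dots,t-1\}: i\in S^*\setminus S^{t'}\}|$. *)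

From HB Require Import structures.
From mathcomp Require Import all_boot all_order all_algebra.
From mathcomp Require Import reals.
Set Implicit Arguments. Unset Strict Implicit. Unset Printing Implicit Defensive.
Import Order.TTheory GRing.Theory Num.Theory.
Local Open Scope ring_scope.

Section Oracle.
Variables (R : realType) (n k : nat).

(* Vectors of R^n are functions 'I_n -> R (index i : 'I_n stands for i+1). *)

Definition suppS (x : 'I_n -> R) : {set 'I_n} := [set i | x i != 0].

Definition norm_inf (v : 'I_n -> R) : R := \big[Num.max/0]_(i < n) `|v i|.

(* largest_k v: the k indices ranking highest in the order
   (|v_i|, i) lexicographically, i.e. the k entries of largest absolute value
   with ties broken by selecting the highest indices:
   i is selected iff fewer than k indices j beat it. *)
Definition beats (v : 'I_n -> R) (i : 'I_n) : {set 'I_n} :=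
  [set j : 'I_n | (`|v i| < `|v j|) || ((`|v j| == `|v i|) && (i < j)%N)].
Definition largest_k (v : 'I_n -> R) : {set 'I_n} :=
  [set i : 'I_n | (#|beats v i| < k)%N].

Variables (xstar X0 : 'I_n -> R) (eta : R).

Definition oracle_u (X : 'I_n -> R) : 'I_n -> R :=
  fun i => if (i \in suppS xstar) && (i \notin largest_k X) then - (eta * xstar i) else 0.

Fixpoint oracle_X (t : nat) : 'I_n -> R :=
  match t with
  | 0 => X0
  | t'.+1 => fun i => oracle_X t' i - oracle_u (oracle_X t') i
  end.

Definition oracle_S (t : nat) : {set 'I_n} := largest_k (oracle_X t).

Definition oracle_c (t : nat) (i : 'I_n) : nat :=
  count (fun t' => (i \in suppS xstar) && (i \notin oracle_S t')) (iota 0 t).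

End Oracle.

From HB Require Import structures.
From mathcomp Require Import all_boot all_order all_algebra.
From mathcomp Require Import reals.
Import Order.TTheory GRing.Theory Num.Theory.
Local Open Scope ring_scope.

(* Coordinates outside S* never move, and coordinate i in S* equals
   X0_i + c_i eta x*_i.  When i is not selected, at least k indices beat it,
   but fewer than k other indices lie in S*, so i is beaten by a coordinate
   outside S*, whose modulus is at most ||X0||.  Hence whenever c_i is about to
   grow, c_i eta |x*_i| <= |X_i| + |X0_i| <= 2 ||X0||, and c_i grows by one. *)

Lemma norm_inf_ge {R : realType} {n : nat} (v : 'I_n -> R) (j : 'I_n) :
  `|v j| <= norm_inf v.
Proof. exact: le_bigmax. Qed.

Section LargestK.
Context {R : realType} {n k : nat} (v : 'I_n -> R).

Lemma beats_irrefl (i : 'I_n) : i \notin beats v i.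
Proof. by rewrite inE ltxx ltnn andbF. Qed.

Lemma beats_norm_le (i j : 'I_n) : j \in beats v i -> `|v i| <= `|v j|.
Proof. by rewrite inE => /orP[/ltW // | /andP[/eqP-> _]]. Qed.

Lemma notin_largest_k_beaten {A : {set 'I_n}} {i : 'I_n} :
  (#|A| <= k)%N -> i \in A -> i \notin largest_k k v ->
  exists2 j, j \notin A & `|v i| <= `|v j|.
Proof.
move=> cardA Ai; rewrite inE -leqNgt => k_le_beats.
have /subsetPn[j bij jNAi] : ~~ (beats v i \subset A :\ i).
  apply: contraTN k_le_beats => /subset_leq_card le_beats; rewrite -ltnNge.
  by apply: leq_ltn_trans le_beats _; rewrite (cardsD1 i) Ai in cardA.
exists j; last exact: beats_norm_le.
move: jNAi; rewrite !inE negb_and negbK => /orP[/eqP eji | //].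
by move: bij; rewrite eji (negbTE (beats_irrefl i)).
Qed.

End LargestK.

Section OracleSequence.
Variables (R : realType) (n k : nat) (xstar X0 : 'I_n -> R) (eta : R).

Local Notation X := (oracle_X k xstar X0 eta).
Local Notation S := (oracle_S k xstar X0 eta).
Local Notation c := (oracle_c k xstar X0 eta).

Lemma oracle_cS (t : nat) (i : 'I_n) :
  c t.+1 i = (c t i + ((i \in suppS xstar) && (i \notin S t)))%N.
Proof. by rewrite /oracle_c -addn1 iotaD count_cat /= addn0. Qed.

Lemma oracle_XE (t : nat) (i : 'I_n) :
  X t i = X0 i + (c t i)%:R * (eta * xstar i).
Proof.
elim: t => [|t IH]; first by rewrite mul0r addr0.
rewrite /= IH oracle_cS natrD /oracle_u -/(S t).
by case: (_ && _); rewrite ?subr0 ?addr0 // opprK mulrDl mul1r addrA.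
Qed.

Lemma oracle_X_notin_supp (t : nat) (j : 'I_n) :
  j \notin suppS xstar -> X t j = X0 j.
Proof. by rewrite oracle_XE inE negbK => /eqP->; rewrite !mulr0 addr0. Qed.

Hypothesis card_supp : (#|suppS xstar| <= k)%N.

Lemma notin_oracle_S_norm_le (t : nat) (i : 'I_n) :
  i \in suppS xstar -> i \notin S t -> `|X t i| <= norm_inf X0.
Proof.
move=> supp_i iNS.
have [j jNsupp le_ij] := notin_largest_k_beaten (X t) card_supp supp_i iNS.
by rewrite (le_trans le_ij) // oracle_X_notin_supp // norm_inf_ge.
Qed.

Lemma notin_oracle_S_count_le (t : nat) (i : 'I_n) :
  0 <= eta -> i \in suppS xstar -> i \notin S t ->
  (c t i)%:R * (eta * `|xstar i|) <= 2 * norm_inf X0.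
Proof.
move=> eta_ge0 supp_i iNS.
have -> : (c t i)%:R * (eta * `|xstar i|) = `|X t i - X0 i|.
  by rewrite oracle_XE addrC addKr !normrM normr_nat ger0_norm.
rewrite (le_trans (ler_normB _ _)) // mulr2n mulrDl mul1r.
by rewrite lerD ?norm_inf_ge ?notin_oracle_S_norm_le.
Qed.

End OracleSequence.

Theorem lemmaC3 (R : realType) (n k : nat) (hk0 : (0 < k)%N) (hkn : (k <= n)%N)
  (xstar : 'I_n -> R) (hsupp : (#|suppS xstar| <= k)%N)
  (X0 : 'I_n -> R) (eta : R) (heta : 0 < eta)
  (i : 'I_n) (hi : i \in suppS xstar) (t : nat) (ht : (1 <= t)%N) :
  ((oracle_c k xstar X0 eta t i)%:R : R)
    <= 2 * norm_inf X0 / (eta * `|xstar i|) + 1.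
Proof.
have step_pos : 0 < eta * `|xstar i|.
  by rewrite mulr_gt0 // normr_gt0; rewrite inE in hi.
have norm_ge0 : 0 <= norm_inf X0 := le_trans (normr_ge0 _) (norm_inf_ge X0 i).
have bound_ge0 : 0 <= 2 * norm_inf X0 / (eta * `|xstar i|).
  by rewrite divr_ge0 ?mulr_ge0 // ltW.
clear ht; elim: t => [|t IH]; first by rewrite ler_wpDl.
rewrite oracle_cS hi natrD.
have [_ | iNS] := boolP (i \in oracle_S k xstar X0 eta t).
  by rewrite addr0.
rewrite lerD2r ler_pdivlMr //.
exact: notin_oracle_S_count_le (ltW heta) hi iNS.
Qed.
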